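(* Let $(X,\mathcal{A})$ be a $(v,k,\lambda)$-BIBD. Then there exists a harmonious colouring of the Levi graph $\mathcal{L}(X,\mathcal{A})$ using $w$ colours if and only if there is a strong nesting $\phi:\mathcal{A}\to Y$ of $(X,\mathcal{A})$ with $X\subseteq Y$ and $|Y|=w$.
   Context: A $(v,k,\lambda)$-BIBD is a pair $(X,\mathcal{A})$ where $X$ is a set of $v$ points and $\mathcal{A}$ is a multiset of $k$-subsets of $X$ (blocks) such that every pair of distinct points lies in exactly $\lambda$ blocks. Given such $(X,\mathcal{A})$ and a set $Y\supseteq X$ with $|Y|=w$, a map $\phi:\mathcal{A}\to Y$ is a strong nesting if (1) $\phi(A)\notin A$ for every block $A\in\mathcal{A}$, and (2) the multiset of pairs $\{\{x,\phi(A)\}: A\in\mathcal{A},\ x\in A\}$ consists of distinct pairs. The Levi graph $\mathcal{L}(X,\mathcal{A})$ is the bipartite graph with vertex set $X\cup\mathcal{A}$ (each block of the multiset a separate vertex) and an edge $\{x,A\}$ whenever $x\in A$. A harmonious colouring of a graph is a map $c$ from its vertices to a set of colours such that adjacent vertices receive different colours and no two distinct edges $\{u,u'\}$, $\{z,z'\}$ satisfy $\{c(u),c(u')\}=\{c(z),c(z')\}$. *)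

From mathcomp Require Import all_boot.
Set Implicit Arguments. Unset Strict Implicit. Unset Printing Implicit Defensive.

(* A block design on point type X with blocks indexed by B (a multiset of
   blocks: distinct indices may carry equal blocks). *)
Definition is_bibd (X B : finType) (blk : B -> {set X}) (v k lam : nat) : Prop :=
  [/\ #|X| = v,
      (forall b, #|blk b| = k) &
      (forall x y : X, x != y ->
         #|[set b | (x \in blk b) && (y \in blk b)]| = lam)].

Definition levi_adj (X B : finType) (blk : B -> {set X}) : rel (X + B) :=
  fun u w => match u, w with
             | inl x, inr b => x \in blk b
             | inr b, inl x => x \in blk b
             | _, _ => false
             end.

Definition harmonious (V C : finType) (adj : rel V) (c : V -> C) : Prop :=
  (forall u u', adj u u' -> c u != c u') /\
  (forall u u' z z', adj u u' -> adj z z' ->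
     [set u; u'] != [set z; z'] ->
     [set c u; c u'] != [set c z; c z']).

(* Strong nesting phi : B -> Y, where X is embedded in Y by the injection emb. *)
Definition strong_nesting (X B Y : finType) (blk : B -> {set X})
    (emb : X -> Y) (phi : B -> Y) : Prop :=
  (forall b, phi b \notin emb @: blk b) /\
  (forall b b' x x', x \in blk b -> x' \in blk b' ->
     [set emb x; phi b] = [set emb x'; phi b'] -> b = b' /\ x = x').

From mathcomp Require Import all_boot.

Set Implicit Arguments.
Unset Strict Implicit.
Unset Printing Implicit Defensive.

(* A harmonious colouring c of the Levi graph is exactly a strong nesting read
   off its values: c restricted to the blocks is the nesting phi, c restricted
   to the points is the embedding of X into the colour set, properness is
   phi(A) \notin A and harmoniousness is the distinctness of the pairs
   {x, phi(A)}.  The embedding is injective because two distinct points lie in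
   a common block (lambda > 0), and distinct neighbours of a vertex receive
   distinct colours in any harmonious colouring.  Conversely, a strong nesting
   followed by any bijection of Y onto 'I_w is a harmonious colouring. *)

Lemma imset_set2 (aT rT : finType) (f : aT -> rT) (a b : aT) :
  f @: [set a; b] = [set f a; f b].
Proof. by rewrite imsetU1 imset_set1. Qed.

Section HarmoniousColouring.

Variables (V C : finType) (adj : rel V) (c : V -> C).
Hypothesis c_harm : harmonious adj c.

Lemma harmonious_comp (D : finType) (g : C -> D) :
  injective g -> harmonious adj (g \o c).
Proof.
case: c_harm => c_proper c_pairs g_inj; split=> [u u' uu'|u u' z z' uu' zz' ne].
  by rewrite /= (inj_eq g_inj) c_proper.
by rewrite /= -!imset_set2 (inj_eq (imset_inj g_inj)) !imset_set2 c_pairs.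
Qed.

Lemma harmonious_common_neighbour (u z x : V) :
  adj u x -> adj z x -> u != z -> c u != c z.
Proof.
case: c_harm => c_proper c_pairs ux zx uz.
have xu : u != x by apply: contraNneq (c_proper _ _ ux) => ->.
have edges_ne : [set u; x] != [set z; x].
  apply: contra_neq uz => /setP/(_ u); rewrite !inE eqxx (negbTE xu) !orbF.
  by move/esym/eqP.
by apply: contraNneq (c_pairs _ _ _ _ ux zx edges_ne) => ->.
Qed.

End HarmoniousColouring.

Section LeviGraph.

Variables (X B : finType) (blk : B -> {set X}).

Definition levi_colouring (Y : finType) (emb : X -> Y) (phi : B -> Y)
    (u : X + B) : Y :=
  match u with inl x => emb x | inr b => phi b end.

Lemma levi_edge (u u' : X + B) : levi_adj blk u u' ->
  exists x b, x \in blk b /\ [set u; u'] = [set inl x; inr b].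
Proof.
case: u u' => [x|b] [x'|b'] //= xb; first by exists x, b'.
by exists x', b; rewrite setUC.
Qed.

Lemma bibd_pair_in_block (v k lam : nat) (x y : X) :
  is_bibd blk v k lam -> 0 < lam -> x != y ->
  exists b, x \in blk b /\ y \in blk b.
Proof.
case=> _ _ blk_pairs lam_gt0 /blk_pairs card_xy.
have /card_gt0P[b] : 0 < #|[set b | (x \in blk b) && (y \in blk b)]|.
  by rewrite card_xy.
by rewrite inE => /andP; exists b.
Qed.

Variables (C : finType) (c : X + B -> C).
Hypothesis c_harm : harmonious (levi_adj blk) c.

Lemma harmonious_levi_strong_nesting : strong_nesting blk (c \o inl) (c \o inr).
Proof.
case: c_harm => c_proper c_pairs; split=> [b|b b' x x' xb x'b' colours_eq].
  apply/imsetP=> -[x xb /= cx].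
  by move: (c_proper (inl x) (inr b) xb); rewrite cx eqxx.
have edges_eq : [set inl x; inr b] = [set inl x'; inr b'] :> {set X + B}.
  apply/eqP/negP=> /negP/(c_pairs (inl x) (inr b) (inl x') (inr b') xb x'b').
  by rewrite colours_eq eqxx.
have : inr b \in [set inl x'; inr b'] by rewrite -edges_eq set22.
have : inl x \in [set inl x'; inr b'] by rewrite -edges_eq set21.
by rewrite !inE => /orP[/eqP[]|//] -> /orP[//|/eqP[]].
Qed.

Lemma harmonious_levi_points_inj :
  (forall x y : X, x != y -> exists b, x \in blk b /\ y \in blk b) ->
  injective (c \o inl).
Proof.
move=> covered x y /= cxy; apply/eqP/negPn/negP=> /[dup] xy /covered[b [xb yb]].
have : inl x != inl y :> X + B by [].
move/(@harmonious_common_neighbour _ _ _ _ c_harm (inl x) (inl y) (inr b) xb yb).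
by rewrite cxy eqxx.
Qed.

End LeviGraph.

Lemma strong_nesting_harmonious_levi (X B Y : finType) (blk : B -> {set X})
    (emb : X -> Y) (phi : B -> Y) :
  strong_nesting blk emb phi ->
  harmonious (levi_adj blk) (levi_colouring emb phi).
Proof.
case=> phi_out pairs_uniq; split=> [[x|b] [x'|b'] //= xb|u u' z z' uu' zz'].
- by apply: contraNneq (phi_out b') => <-; apply: imset_f.
- by apply: contraNneq (phi_out b) => ->; apply: imset_f.
rewrite -!imset_set2.
case/levi_edge: uu' => x [b [xb ->]]; case/levi_edge: zz' => x' [b' [x'b' ->]].
apply: contra_neq; rewrite !imset_set2 => /= colours_eq.
by case: (pairs_uniq _ _ _ _ xb x'b' colours_eq) => -> ->.
Qed.

Theorem theorem5p1 (X B : finType) (blk : B -> {set X}) (v k lam w : nat) :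
  is_bibd blk v k lam -> 0 < lam ->
  (exists c : X + B -> 'I_w, harmonious (levi_adj blk) c) <->
  (exists (Y : finType) (emb : X -> Y) (phi : B -> Y),
      [/\ injective emb, #|Y| = w & strong_nesting blk emb phi]).
Proof.
move=> bibd lam_gt0; split=> [[c c_harm] | [Y [emb [phi [_ card_Y nesting]]]]].
  exists 'I_w, (c \o inl), (c \o inr); split.
  - apply: (harmonious_levi_points_inj c_harm) => x y.
    exact: bibd_pair_in_block bibd lam_gt0.
  - exact: card_ord.
  - exact: harmonious_levi_strong_nesting.
have rank_inj : injective (cast_ord card_Y \o enum_rank).
  by move=> y y' /cast_ord_inj/enum_rank_inj.
exists ((cast_ord card_Y \o enum_rank) \o levi_colouring emb phi).
exact (harmonious_comp (strong_nesting_harmonious_levi nesting) rank_inj).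
Qed.
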